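(* Let $G=(V,E)$ be an infinite, locally finite, connected weighted graph (as described in the context). Assume that there exist a vertex $x_0\in V$ and a constant $C\geq 0$ such that $H(x)\leq C$ for all $x\in V$, where $H$ is the mean curvature function with respect to $x_0$. Let $v_0:V\to(0,\infty)$ be a bounded positive function. Then any bounded positive solution $v(t,x)$ of $$v_t=\Delta \log v \quad \text{on } (0,\infty)\times V$$ with initial data $v(0,\cdot)=v_0$ satisfies $$\sup_{x\in V} v(t,x)\leq \sup_{x\in V} v_0(x)\quad\text{for every } t\geq 0.$$
   Context: $G=(V,E)$ is an infinite, locally finite, connected graph without loops or multiple edges; $x\sim y$ means $x$ and $y$ are joined by an edge. Each edge $x\sim y$ carries a symmetric weight $\mu_{xy}=\mu_{yx}\geq 0$, with $d_x:=\sum_{y\sim x}\mu_{xy}>0$ for every $x\in V$. For $f:V\to\mathbb{R}$ the Laplacian is $\Delta f(x)=\frac{1}{d_x}\sum_{y\sim x}\mu_{xy}(f(y)-f(x))$. Fix $x_0\in V$ and let $r(x)=d(x,x_0)$ be the graph distance to $x_0$. The mean curvature is $H(x)=\Delta r(x)=\frac{d_+(x)-d_-(x)}{d_x}$, where $d_\pm(x)=\sum_{y\sim x,\ r(y)=r(x)\pm 1}\mu_{xy}$. A solution $v(t,x)$ is a function on $[0,\infty)\times V$, differentiable in $t$ for each fixed $x$, satisfying the equation pointwise for $t>0$ (with $\Delta$ acting in the $x$ variable); ''bounded'' means bounded on $[0,\infty)\times V$. *)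

From Stdlib Require Import Reals List Relations.
From Coquelicot Require Import Coquelicot.
Open Scope R_scope.

Section GraphDefs.
Variable V : Type.

Definition simple_graph (adj : V -> V -> Prop) : Prop :=
  (forall x y, adj x y -> adj y x) /\ (forall x, ~ adj x x).

(** Local finiteness: the neighbourhood of every vertex is the finite set
    enumerated (without repetition) by the list [nb x]. *)
Definition nbrs_list (adj : V -> V -> Prop) (nb : V -> list V) : Prop :=
  forall x, NoDup (nb x) /\ (forall y, adj x y <-> In y (nb x)).

Definition infinite_vertices : Prop := ~ exists l : list V, forall x, In x l.

Definition connected (adj : V -> V -> Prop) : Prop :=
  forall x y, clos_refl_trans V adj x y.

Inductive walk (adj : V -> V -> Prop) : V -> V -> nat -> Prop :=
| walk_nil : forall x, walk adj x x 0
| walk_cons : forall x y z n, adj x y -> walk adj y z n -> walk adj x z (S n).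

Definition is_dist_to (adj : V -> V -> Prop) (x0 : V) (r : V -> nat) : Prop :=
  forall x, walk adj x0 x (r x) /\ (forall m, walk adj x0 x m -> (r x <= m)%nat).

Definition sum_list (l : list V) (f : V -> R) : R :=
  fold_right (fun y a => f y + a) 0 l.

Definition deg (nb : V -> list V) (mu : V -> V -> R) (x : V) : R :=
  sum_list (nb x) (fun y => mu x y).

Definition good_weights (adj : V -> V -> Prop) (nb : V -> list V)
  (mu : V -> V -> R) : Prop :=
  (forall x y, adj x y -> mu x y = mu y x) /\
  (forall x y, adj x y -> 0 <= mu x y) /\
  (forall x, 0 < deg nb mu x).

Definition laplacian (nb : V -> list V) (mu : V -> V -> R) (f : V -> R) (x : V) : R :=
  / deg nb mu x * sum_list (nb x) (fun y => mu x y * (f y - f x)).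

Definition d_plus (nb : V -> list V) (mu : V -> V -> R) (r : V -> nat) (x : V) : R :=
  sum_list (nb x) (fun y => if Nat.eqb (r y) (S (r x)) then mu x y else 0).

Definition d_minus (nb : V -> list V) (mu : V -> V -> R) (r : V -> nat) (x : V) : R :=
  sum_list (nb x) (fun y => if Nat.eqb (S (r y)) (r x) then mu x y else 0).

Definition mean_curv (nb : V -> list V) (mu : V -> V -> R) (r : V -> nat) (x : V) : R :=
  (d_plus nb mu r x - d_minus nb mu r x) / deg nb mu x.

End GraphDefs.

Arguments simple_graph {V}.
Arguments nbrs_list {V}.
Arguments connected {V}.
Arguments is_dist_to {V}.
Arguments good_weights {V}.
Arguments laplacian {V}.
Arguments mean_curv {V}.

From Stdlib Require Import Reals List Lra Lia Classical.
From Coquelicot Require Import Coquelicot.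
Open Scope R_scope.

(* A maximum principle with a barrier. Fix B >= sup v0 and eps > 0 and put
   phi(t, x) = v(t, x) - eps (r(x) + 1 + K t) with K = C/B + 1. Since v is
   bounded, phi < B outside a finite ball, so if phi ever exceeds B there is a
   first time s > 0 and a vertex y with phi(s, y) = B = max phi on [0, s] x V.
   There ln a - ln b <= (a - b)/b gives Delta ln v(s, y) <= eps H(y)/v(s, y)
   <= eps C/B, whereas d/dt v(s, y) >= eps K because phi(., y) is maximal at s:
   a contradiction. Letting eps -> 0 yields v <= B. *)

Lemma ln_sub_le a b : 0 < a -> 0 < b -> ln a - ln b <= (a - b) / b.
Proof.
  intros Ha Hb.
  rewrite <- ln_div by assumption.
  pose proof (exp_ineq1_le (ln (a / b))) as Hexp.
  rewrite exp_ln in Hexp by (apply Rdiv_lt_0_compat; assumption).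
  replace ((a - b) / b) with (a / b - 1) by (field; lra).
  lra.
Qed.

Section Walks.

Variables (V : Type) (adj : V -> V -> Prop).

Lemma walk_snoc x y z n : walk V adj x y n -> adj y z -> walk V adj x z (S n).
Proof.
  induction 1 as [x | x w y n Axw _ IH]; intros Ayz.
  - apply walk_cons with z; [assumption | constructor].
  - apply walk_cons with w; auto.
Qed.

Lemma walk_0_eq x y : walk V adj x y 0 -> x = y.
Proof. now inversion 1. Qed.

Lemma walk_unsnoc n : forall x z, walk V adj x z (S n) ->
  exists y, walk V adj x y n /\ adj y z.
Proof.
  induction n as [| n IH]; intros x z W; inversion W as [| ? w ? ? Axw Wwz]; subst.
  - apply walk_0_eq in Wwz; subst. exists x; split; [constructor | assumption].
  - destruct (IH _ _ Wwz) as [y [Wwy Ayz]].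
    exists y; split; [apply walk_cons with w |]; assumption.
Qed.

Lemma dist_adj_le x0 r : is_dist_to adj x0 r ->
  forall x y, adj x y -> (r y <= S (r x))%nat.
Proof.
  intros Hr x y Axy. apply (proj2 (Hr y)), walk_snoc with x; [apply Hr | assumption].
Qed.

Lemma dist_ball_in_list nb x0 r : nbrs_list adj nb -> is_dist_to adj x0 r ->
  forall N, exists L, forall x, (r x <= N)%nat -> In x L.
Proof.
  intros Hnb Hr. induction N as [| N [L HL]].
  - exists (x0 :: nil). intros x Hx.
    destruct (Hr x) as [W _]. replace (r x) with 0%nat in W by lia.
    apply walk_0_eq in W. subst. now left.
  - exists (L ++ flat_map nb L). intros x Hx. apply in_or_app.
    destruct (Nat.le_gt_cases (r x) N) as [HxN | HxN]; [left; auto | right].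
    destruct (Hr x) as [W _]. replace (r x) with (S N) in W by lia.
    destruct (walk_unsnoc _ _ _ W) as [y [Wy Ayx]].
    apply in_flat_map. exists y. split.
    + apply HL, (proj2 (Hr y)), Wy.
    + apply (proj1 (proj2 (Hnb y) x)), Ayx.
Qed.

End Walks.

Section SumList.

Variable V : Type.

Lemma sum_list_le (l : list V) f g : (forall y, In y l -> f y <= g y) ->
  sum_list V l f <= sum_list V l g.
Proof.
  induction l as [| a l IH]; simpl; intros Hfg; [lra |].
  pose proof (Hfg a (or_introl eq_refl)).
  assert (sum_list V l f <= sum_list V l g) by (apply IH; auto).
  lra.
Qed.

Lemma sum_list_ext (l : list V) f g : (forall y, In y l -> f y = g y) ->
  sum_list V l f = sum_list V l g.
Proof.
  induction l as [| a l IH]; simpl; intros Hfg; [reflexivity |].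
  rewrite (Hfg a (or_introl eq_refl)), IH; auto.
Qed.

Lemma sum_list_scal_l (l : list V) c f :
  sum_list V l (fun y => c * f y) = c * sum_list V l f.
Proof. induction l as [| a l IH]; simpl; [ring | rewrite IH; ring]. Qed.

Lemma sum_list_sub (l : list V) f g :
  sum_list V l (fun y => f y - g y) = sum_list V l f - sum_list V l g.
Proof. induction l as [| a l IH]; simpl; [ring | rewrite IH; ring]. Qed.

End SumList.
Section MeanCurvature.

Variables (V : Type) (adj : V -> V -> Prop) (nb : V -> list V) (mu : V -> V -> R).
Variables (x0 : V) (r : V -> nat).
Hypothesis adj_sym : forall x y, adj x y -> adj y x.
Hypothesis Hnb : nbrs_list adj nb.
Hypothesis Hmu : good_weights adj nb mu.
Hypothesis Hr : is_dist_to adj x0 r.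

Lemma d_plus_sub_d_minus x :
  d_plus V nb mu r x - d_minus V nb mu r x =
  sum_list V (nb x) (fun y => mu x y * (INR (r y) - INR (r x))).
Proof.
  unfold d_plus, d_minus. rewrite <- sum_list_sub.
  apply sum_list_ext. intros y Hy.
  assert (Axy : adj x y) by apply (proj2 (Hnb x)), Hy.
  pose proof (dist_adj_le V adj x0 r Hr x y Axy).
  pose proof (dist_adj_le V adj x0 r Hr y x (adj_sym x y Axy)).
  destruct (Nat.eqb_spec (r y) (S (r x))) as [E1 | E1];
    destruct (Nat.eqb_spec (S (r y)) (r x)) as [E2 | E2]; try lia.
  - rewrite E1, S_INR; ring.
  - rewrite <- E2, S_INR; ring.
  - replace (r y) with (r x) by lia; ring.
Qed.

Lemma laplacian_ln_le_at_max (g : V -> R) eps x :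
  (forall y, 0 < g y) -> 0 <= eps ->
  (forall y, In y (nb x) -> g y - eps * INR (r y) <= g x - eps * INR (r x)) ->
  laplacian nb mu (fun y => ln (g y)) x <= eps * mean_curv nb mu r x / g x.
Proof.
  intros Hg Heps Hmax.
  destruct Hmu as [_ [Hmu0 Hdeg]].
  pose proof (Hg x) as Hgx. pose proof (Hdeg x) as Hdx.
  assert (Hsum : sum_list V (nb x) (fun y => mu x y * (ln (g y) - ln (g x)))
      <= eps / g x * (d_plus V nb mu r x - d_minus V nb mu r x)).
  { rewrite d_plus_sub_d_minus, <- sum_list_scal_l.
    apply sum_list_le. intros y Hy.
    assert (Axy : adj x y) by apply (proj2 (Hnb x)), Hy.
    assert (Hln : ln (g y) - ln (g x) <= eps / g x * (INR (r y) - INR (r x))).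
    { eapply Rle_trans; [apply ln_sub_le; auto |].
      replace (eps / g x * (INR (r y) - INR (r x)))
        with ((eps * (INR (r y) - INR (r x))) / g x) by (field; lra).
      apply Rmult_le_compat_r; [left; apply Rinv_0_lt_compat |
        pose proof (Hmax y Hy)]; lra. }
    pose proof (Hmu0 x y Axy). nra. }
  unfold laplacian, mean_curv.
  replace (eps * ((d_plus V nb mu r x - d_minus V nb mu r x) / deg V nb mu x) / g x)
    with (/ deg V nb mu x * (eps / g x * (d_plus V nb mu r x - d_minus V nb mu r x)))
    by (field; lra).
  apply Rmult_le_compat_l; [left; apply Rinv_0_lt_compat |]; assumption.
Qed.

End MeanCurvature.

Lemma filter_forall_in_list {T U : Type} (F : (T -> Prop) -> Prop) {FF : Filter F}
  (L : list U) (P : U -> T -> Prop) :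
  (forall y, In y L -> F (P y)) -> F (fun t => forall y, In y L -> P y t).
Proof.
  induction L as [| a L IH]; intros HP.
  - apply filter_forall. intros t y [].
  - apply filter_imp with (fun t => P a t /\ forall y, In y L -> P y t).
    + intros t [Ha HL] y [<- | Hy]; auto.
    + apply filter_and; [apply HP; now left | apply IH; intros y Hy; apply HP; now right].
Qed.

Lemma locally_R_interval (s : R) (P : R -> Prop) :
  locally s P -> exists d, 0 < d /\ forall t, Rabs (t - s) < d -> P t.
Proof. intros [d Hd]. exists d. split; [apply cond_pos | exact Hd]. Qed.

Lemma right_derivative_right_continuous (f : R -> R) l :
  filterlim (fun h => (f h - f 0) / h) (at_right 0) (locally l) ->
  filterlim f (at_right 0) (locally (f 0)).
Proof.
  intros Hq.
  apply filterlim_ext_loc with (f := fun h => f 0 + (f h - f 0) / h * h).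
  { exists (mkposreal 1 Rlt_0_1). intros h _ Hh. field. lra. }
  assert (Hlim : filterlim (fun h => f 0 + (f h - f 0) / h * h) (at_right 0)
                   (locally (f 0 + l * 0))).
  { eapply filterlim_comp_2;
      [apply filterlim_const | | apply (filterlim_plus (f 0) (l * 0))].
    eapply filterlim_comp_2; [exact Hq | | apply (filterlim_mult l 0)].
    apply (filterlim_filter_le_1 (F := locally 0)); [| apply filterlim_id].
    intros P HP. exact (filter_imp _ _ (fun h Ph _ => Ph) HP). }
  now rewrite Rmult_0_r, Rplus_0_r in Hlim.
Qed.

Lemma derive_ge_of_left_slope (f : R -> R) s l c : is_derive f s l ->
  (exists d, 0 < d /\ forall t, s - d < t < s -> f t - f s <= c * (t - s)) -> c <= l.
Proof.
  intros Hf [d [Hd Hslope]]. apply is_derive_Reals in Hf.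
  destruct (Rle_or_lt c l) as [| Hlt]; [assumption | exfalso].
  destruct (Hf (c - l) ltac:(lra)) as [dl Hdl].
  set (h := - Rmin d dl / 2).
  assert (Hm : 0 < Rmin d dl) by (apply Rmin_pos; [lra | apply cond_pos]).
  pose proof (Rmin_l d dl). pose proof (Rmin_r d dl).
  specialize (Hdl h ltac:(unfold h; lra) ltac:(unfold h; rewrite Rabs_left; lra)).
  specialize (Hslope (s + h) ltac:(unfold h; lra)).
  replace (s + h - s) with h in Hslope by ring.
  apply Rabs_def2 in Hdl.
  assert (Hq : (f (s + h) - f s) / h * h = f (s + h) - f s) by (field; unfold h; lra).
  assert (h < 0) by (unfold h; lra).
  nra.
Qed.

Lemma filterlim_eventually_lt {T : Type} (F : (T -> Prop) -> Prop) (f : T -> R) a B :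
  filterlim f F (locally a) -> a < B -> F (fun t => f t < B).
Proof. intros Hf HaB. exact (Hf _ (open_lt B a HaB)). Qed.

Lemma locally_pos s : 0 < s -> locally s (fun t => 0 <= t).
Proof. intros Hs. apply filter_imp with (fun t => 0 < t); [intros; lra | exact (open_gt 0 s Hs)]. Qed.

Section FirstTouchingTime.

Variables (V : Type) (phi : R -> V -> R) (B : R) (L : list V).
Hypothesis below_outside : forall t y, 0 <= t -> ~ In y L -> phi t y < B.
Hypothesis below_at_0 : forall y, phi 0 y < B.
Hypothesis below_right_of_0 : forall y, at_right 0 (fun t => phi t y < B).
Hypothesis continuous_after_0 : forall t y, 0 < t -> continuous (fun t => phi t y) t.

Lemma eventually_below_everywhere (F : (R -> Prop) -> Prop) {FF : Filter F} :
  F (fun t => 0 <= t) -> (forall y, F (fun t => phi t y < B)) ->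
  F (fun t => forall y, phi t y < B).
Proof.
  intros Hpos Hbelow.
  apply filter_imp with (fun t => 0 <= t /\ forall y, In y L -> phi t y < B).
  - intros t [Ht HL] y. destruct (classic (In y L)); auto.
  - apply filter_and; [exact Hpos | apply filter_forall_in_list; auto].
Qed.

Lemma below_near_0 : exists d, 0 < d /\ forall t y, 0 <= t < d -> phi t y < B.
Proof.
  destruct (eventually_below_everywhere (at_right 0)) as [d Hd].
  - exists (mkposreal 1 Rlt_0_1). intros t _ Ht. lra.
  - exact below_right_of_0.
  - exists d. split; [apply cond_pos |]. intros t y [[Ht | <-] Htd]; [| apply below_at_0].
    apply Hd; [change (Rabs (t - 0) < d); rewrite Rminus_0_r, Rabs_right |]; lra.
Qed.

Lemma below_after s : 0 < s -> (forall y, phi s y < B) ->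
  exists d, 0 < d /\ forall t y, s <= t < s + d -> phi t y < B.
Proof.
  intros Hs Hbelow.
  destruct (locally_R_interval s _
    (eventually_below_everywhere (locally s) (locally_pos s Hs)
      (fun y => filterlim_eventually_lt _ _ _ _ (continuous_after_0 s y Hs) (Hbelow y))))
    as [d [Hd Hnear]].
  exists d. split; [exact Hd |]. intros t y Ht.
  apply Hnear. rewrite Rabs_right; lra.
Qed.

Lemma le_at_left_limit s y : 0 < s -> (forall t, 0 <= t < s -> phi t y <= B) ->
  phi s y <= B.
Proof.
  intros Hs Hbefore.
  change (Rbar_le (phi s y) B).
  apply (filterlim_le (F := at_left s) (fun t => phi t y) (fun _ => B)).
  - unfold at_left, within.
    apply filter_imp with (fun t => 0 <= t); [| exact (locally_pos s Hs)].
    intros t Ht Hts. apply Hbefore. lra.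
  - apply (filterlim_filter_le_1 (F := locally s)); [| exact (continuous_after_0 s y Hs)].
    intros P HP. exact (filter_imp _ _ (fun t Pt _ => Pt) HP).
  - apply filterlim_const.
Qed.

Lemma first_touching_time t1 x1 : 0 <= t1 -> B < phi t1 x1 ->
  exists s y, 0 < s /\ phi s y = B /\ forall t z, 0 <= t <= s -> phi t z <= B.
Proof.
  intros Ht1 Hx1.
  set (E := fun tau => tau <= t1 /\ forall t z, 0 <= t <= tau -> phi t z <= B).
  assert (E_min : forall tau, (forall t z, 0 <= t <= tau -> phi t z <= B) ->
                    E (Rmin tau t1)).
  { intros tau Hle. split; [apply Rmin_r |]. intros t z Ht.
    apply Hle. pose proof (Rmin_l tau t1). lra. }
  destruct (completeness E) as [s [Hub Hleast]].
  { exists t1. intros tau [Htau _]. exact Htau. }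
  { exists 0. split; [assumption |]. intros t z Ht.
    replace t with 0 by lra. left. apply below_at_0. }
  assert (Hs_t1 : s <= t1) by (apply Hleast; intros tau [Htau _]; exact Htau).
  assert (Hbefore : forall t z, 0 <= t < s -> phi t z <= B).
  { intros t z Ht.
    destruct (classic (exists tau, E tau /\ t < tau)) as [[tau [[_ Htau] Htt]] | Hnone].
    - apply Htau. lra.
    - assert (s <= t); [| lra]. apply Hleast. intros tau Etau.
      apply Rnot_lt_le. intros Htt. apply Hnone. eauto. }
  assert (Hs_pos : 0 < s).
  { assert (Ht1_pos : 0 < t1).
    { destruct Ht1 as [| <-]; [assumption |]. pose proof (below_at_0 x1). lra. }
    destruct below_near_0 as [d [Hd Hnear]].
    apply Rlt_le_trans with (Rmin (d / 2) t1); [apply Rmin_pos; lra |].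
    apply Hub, E_min. intros t z Ht. left. apply Hnear. lra. }
  assert (Hat_s : forall z, phi s z <= B).
  { intros z. apply le_at_left_limit; [exact Hs_pos |]. intros t Ht. apply Hbefore, Ht. }
  assert (Htouch : exists y, phi s y = B).
  { apply NNPP. intros Hnone.
    assert (Hlt : forall z, phi s z < B).
    { intros z. destruct (Hat_s z) as [| Heq]; [assumption | exfalso; eauto]. }
    assert (Hs_lt : s < t1).
    { destruct Hs_t1 as [| ->]; [assumption |]. specialize (Hlt x1). lra. }
    destruct (below_after s Hs_pos Hlt) as [d [Hd Hafter]].
    assert (s < Rmin (s + d / 2) t1) by (apply Rmin_glb_lt; lra).
    assert (Rmin (s + d / 2) t1 <= s); [| lra].
    apply Hub, E_min. intros t z Ht. destruct (Rlt_or_le t s).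
    - apply Hbefore. lra.
    - left. apply Hafter. lra. }
  destruct Htouch as [y Hy].
  exists s, y. split; [| split]; [assumption.. |].
  intros t z [Ht0 [Hts | ->]]; [apply Hbefore; lra | apply Hat_s].
Qed.

End FirstTouchingTime.

Section Barrier.

Variables (V : Type) (adj : V -> V -> Prop) (nb : V -> list V) (mu : V -> V -> R).
Variables (x0 : V) (r : V -> nat) (C : R) (v : R -> V -> R) (B : R).
Hypothesis adj_sym : forall x y, adj x y -> adj y x.
Hypothesis Hnb : nbrs_list adj nb.
Hypothesis Hmu : good_weights adj nb mu.
Hypothesis Hr : is_dist_to adj x0 r.
Hypothesis C_nonneg : 0 <= C.
Hypothesis curv_le_C : forall x, mean_curv nb mu r x <= C.
Hypothesis v_pos : forall t x, 0 <= t -> 0 < v t x.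
Hypothesis v_bounded : exists M, forall t x, 0 <= t -> Rabs (v t x) <= M.
Hypothesis v_right_diff_0 : forall x, exists l,
  filterlim (fun h => (v h x - v 0 x) / h) (at_right 0) (locally l).
Hypothesis v_eq : forall t x, 0 < t ->
  is_derive (fun s => v s x) t (laplacian nb mu (fun y => ln (v t y)) x).
Hypothesis B_pos : 0 < B.
Hypothesis v_0_le_B : forall x, v 0 x <= B.

Definition barrier_rate : R := C / B + 1.

Definition barrier (eps t : R) (x : V) : R :=
  v t x - eps * (INR (r x) + 1 + barrier_rate * t).

Lemma barrier_rate_pos : 0 < barrier_rate.
Proof.
  unfold barrier_rate. assert (0 <= C / B) by (apply Rdiv_le_0_compat; lra). lra.
Qed.

Lemma barrier_below_outside_ball eps : 0 < eps ->
  exists L, forall t y, 0 <= t -> ~ In y L -> barrier eps t y < B.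
Proof.
  intros Heps. destruct v_bounded as [M HM].
  destruct (INR_unbounded (M / eps)) as [N HN].
  destruct (dist_ball_in_list V adj nb x0 r Hnb Hr N) as [L HL].
  exists L. intros t y Ht Hy.
  assert (HNy : (N < r y)%nat).
  { destruct (Nat.le_gt_cases (r y) N) as [Hle | Hgt]; [exfalso; auto | exact Hgt]. }
  apply lt_INR in HNy.
  assert (M < eps * INR (r y)).
  { replace M with (eps * (M / eps)) by (field; lra). apply Rmult_lt_compat_l; lra. }
  pose proof (Rle_abs (v t y)). pose proof (HM t y Ht).
  pose proof barrier_rate_pos. assert (0 <= barrier_rate * t) by nra.
  unfold barrier. nra.
Qed.

Lemma barrier_below_at_0 eps : 0 < eps -> forall y, barrier eps 0 y < B.
Proof.
  intros Heps y. unfold barrier. rewrite Rmult_0_r.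
  pose proof (v_0_le_B y). pose proof (pos_INR (r y)). nra.
Qed.

Lemma barrier_below_right_of_0 eps : 0 < eps ->
  forall y, at_right 0 (fun t => barrier eps t y < B).
Proof.
  intros Heps y. destruct (v_right_diff_0 y) as [l Hl].
  pose proof (filterlim_eventually_lt _ _ _ (v 0 y + eps)
    (right_derivative_right_continuous (fun h => v h y) l Hl) ltac:(lra)) as Hnear.
  apply filter_imp with (fun t => 0 < t /\ v t y < v 0 y + eps).
  - intros t [Ht Hvt]. unfold barrier.
    pose proof (v_0_le_B y). pose proof (pos_INR (r y)). pose proof barrier_rate_pos.
    assert (0 <= barrier_rate * t) by nra. nra.
  - apply filter_and; [| exact Hnear].
    exists (mkposreal 1 Rlt_0_1). intros t _ Ht. exact Ht.
Qed.

Lemma barrier_continuous eps t y : 0 < t -> continuous (fun s => barrier eps s y) t.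
Proof.
  intros Ht. apply (ex_derive_continuous (V := R_NormedModule)). unfold barrier.
  apply (ex_derive_minus (fun s => v s y)
           (fun s => eps * (INR (r y) + 1 + barrier_rate * s))).
  - eexists. apply v_eq, Ht.
  - auto_derive. trivial.
Qed.

Lemma barrier_never_touches eps s y : 0 < eps -> 0 < s -> barrier eps s y = B ->
  (forall t z, 0 <= t <= s -> barrier eps t z <= B) -> False.
Proof.
  intros Heps Hs Htouch Hbelow.
  unfold barrier in Htouch, Hbelow.
  assert (Hvy : B <= v s y).
  { pose proof (pos_INR (r y)). pose proof barrier_rate_pos.
    assert (0 <= barrier_rate * s) by nra. nra. }
  assert (Hlap : laplacian nb mu (fun z => ln (v s z)) y <= eps * C / B).
  { eapply Rle_trans.
    { apply (laplacian_ln_le_at_max V adj nb mu x0 r adj_sym Hnb Hmu Hr (v s) eps y).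
      - intros z. apply v_pos. lra.
      - lra.
      - intros z _. pose proof (Hbelow s z ltac:(lra)). lra. }
    pose proof (curv_le_C y).
    apply Rle_trans with (eps * C / v s y).
    - apply Rmult_le_compat_r; [left; apply Rinv_0_lt_compat; lra |].
      apply Rmult_le_compat_l; lra.
    - apply Rmult_le_compat_l; [nra |]. apply Rinv_le_contravar; lra. }
  assert (Hslope : eps * barrier_rate <= laplacian nb mu (fun z => ln (v s z)) y).
  { apply (derive_ge_of_left_slope (fun t => v t y) s); [apply v_eq, Hs |].
    exists s. split; [exact Hs |]. intros t Ht.
    pose proof (Hbelow t y ltac:(lra)). lra. }
  unfold barrier_rate in Hslope.
  replace (eps * (C / B + 1)) with (eps * C / B + eps) in Hslope by (field; lra).
  lra.
Qed.

Lemma barrier_le eps t x : 0 < eps -> 0 <= t -> barrier eps t x <= B.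
Proof.
  intros Heps Ht. apply Rnot_lt_le. intros Habove.
  destruct (barrier_below_outside_ball eps Heps) as [L HL].
  destruct (first_touching_time V (barrier eps) B L HL (barrier_below_at_0 eps Heps)
    (barrier_below_right_of_0 eps Heps) (barrier_continuous eps) t x Ht Habove)
    as [s [y [Hs [Htouch Hbelow]]]].
  exact (barrier_never_touches eps s y Heps Hs Htouch Hbelow).
Qed.

Lemma solution_le_bound t x : 0 <= t -> v t x <= B.
Proof.
  intros Ht. apply Rle_plus_epsilon. intros e He.
  set (D := INR (r x) + 1 + barrier_rate * t).
  assert (HD : 0 < D).
  { unfold D. pose proof (pos_INR (r x)). pose proof barrier_rate_pos. nra. }
  pose proof (barrier_le (e / D) t x ltac:(apply Rdiv_lt_0_compat; lra) Ht) as Hle.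
  unfold barrier in Hle. fold D in Hle.
  replace (e / D * D) with e in Hle by (field; lra). lra.
Qed.

End Barrier.

Lemma Lub_Rbar_range_le {T : Type} (f g : T -> R) (x0 : T) :
  (forall B, (forall x, g x <= B) -> forall x, f x <= B) ->
  Rbar_le (Lub_Rbar (fun a => exists x, a = f x)) (Lub_Rbar (fun a => exists x, a = g x)).
Proof.
  intros Hbound.
  destruct (Lub_Rbar_correct (fun a => exists x, a = g x)) as [Hub _].
  destruct (Lub_Rbar_correct (fun a => exists x, a = f x)) as [_ Hleast].
  apply Hleast. intros a [x ->].
  destruct (Lub_Rbar (fun a => exists x, a = g x)) as [b | |]; simpl; [| trivial |].
  - apply Hbound. intros y. apply (Hub (g y)). eauto.
  - apply (Hub (g x0)). eauto.
Qed.

Theorem theorem2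
  (V : Type) (adj : V -> V -> Prop) (nb : V -> list V) (mu : V -> V -> R)
  (Hsimple : simple_graph adj) (Hnb : nbrs_list adj nb)
  (Hinf : infinite_vertices V) (Hconn : connected adj)
  (Hmu : good_weights adj nb mu)
  (x0 : V) (r : V -> nat) (Hr : is_dist_to adj x0 r)
  (C : R) (HC0 : 0 <= C) (HC : forall x, mean_curv nb mu r x <= C)
  (v0 : V -> R) (Hv0pos : forall x, 0 < v0 x)
  (Hv0bd : exists M, forall x, v0 x <= M)
  (v : R -> V -> R)
  (Hvpos : forall t x, 0 <= t -> 0 < v t x)
  (Hvbd : exists M, forall t x, 0 <= t -> Rabs (v t x) <= M)
  (Hinit : forall x, v 0 x = v0 x)
  (Hdiff0 : forall x, exists l,
      filterlim (fun h => (v h x - v 0 x) / h) (at_right 0) (locally l))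
  (Heq : forall t x, 0 < t ->
      is_derive (fun s => v s x) t (laplacian nb mu (fun y => ln (v t y)) x)) :
  forall t, 0 <= t ->
    Rbar_le (Lub_Rbar (fun a => exists x, a = v t x))
            (Lub_Rbar (fun a => exists x, a = v0 x)).
Proof.
  intros t Ht. apply (Lub_Rbar_range_le _ _ x0).
  intros B HB x.
  assert (B_pos : 0 < B) by (pose proof (Hv0pos x0); pose proof (HB x0); lra).
  apply (solution_le_bound V adj nb mu x0 r C v B (proj1 Hsimple) Hnb Hmu Hr HC0 HC
           Hvpos Hvbd Hdiff0 Heq B_pos); [| exact Ht].
  intros y. rewrite Hinit. apply HB.
Qed.
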